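(* If $(\Phi,\Phi_f,D)$ is a domain-free s-compact information algebra, then its associated labeled information algebra $(\Psi,D)$ is a labeled s-compact information algebra (with $\Gamma_x=\{(\psi,x):\psi\in\Phi_f,\ \psi=\psi^{\Rightarrow x}\}$).
   Context: A domain-free information algebra $(\Phi,D)$ consists of a set $\Phi$, a lattice $D$, a combination $\otimes$ and a focusing $(\psi,x)\mapsto\psi^{\Rightarrow x}$ ($x\in D$) such that: $\otimes$ is associative, commutative with neutral element $e$; $(\psi^{\Rightarrow y})^{\Rightarrow x}=\psi^{\Rightarrow x\wedge y}$; $(\phi^{\Rightarrow x}\otimes\psi)^{\Rightarrow x}=\phi^{\Rightarrow x}\otimes\psi^{\Rightarrow x}$; every $\psi$ has some $x$ with $\psi^{\Rightarrow x}=\psi$; $\psi\otimes\psi^{\Rightarrow x}=\psi$. In both domain-free and labeled algebras, $\psi\le\phi$ iff $\psi\otimes\phi=\phi$; suprema refer to this order. $a\ll b$ means: for every directed $X$ with $b\le\vee X$ there is $c\in X$ with $a\le c$; $\Phi_f=\{\phi\in\Phi:\phi\ll\phi\}$. A domain-free $(\Phi,D)$ with $D$ having a top element is s-compact if there exists $\Gamma\subseteq\Phi$, closed under combination and containing $e$, such that every directed subset of $\Gamma$ has a supremum in $\Phi$, $\phi^{\Rightarrow x}=\vee\{\psi\in\Gamma:\psi=\psi^{\Rightarrow x}\ll\phi\}$ for all $\phi\in\Phi$, $x\in D$, and for every directed $X\subseteq\Gamma$ and $\phi\in\Gamma$ with $\phi\le\vee X$ there is $\psi\in X$ with $\phi\le\psi$;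 then necessarily $\Gamma=\Phi_f$, and one writes $(\Phi,\Phi_f,D)$. The associated labeled information algebra is $(\Psi,D)$ with $\Psi=\{(\phi,x)\in\Phi\times D:\phi=\phi^{\Rightarrow x}\}$, labeling $d(\phi,x)=x$, combination $(\phi,x)\otimes(\psi,y)=(\phi\otimes\psi,x\vee y)$, marginalization $(\phi,x)^{\downarrow y}=(\phi^{\Rightarrow y},y)$ for $y\le x$; neutral elements $e_x=(e,x)$. For a labeled information algebra, $\Phi_x$ denotes the elements with label $x$ and $\ll_x$ the way-below relation of $(\Phi_x,\le)$. A labeled s-compact information algebra is $(\Phi,\{\Gamma_x\}_{x\in D},D)$ with $D$ having a top element $\top$ and, for each $x$, $\Gamma_x\subseteq\Phi_x$ closed under combination, containing $e_x$, such that: (convergency) every directed $X\subseteq\Gamma_x$ has a supremum $\vee X\in\Phi_x$; (strong density) for all $\phi\in\Phi_x$, $\phi=\vee\{\psi^{\downarrow x}\in\Gamma_x:\ \psi\in\Phi,\ x\le d(\psi),\ \psi^{\downarrow x}\otimes e_\top\in\Gamma_\top,\ \psi^{\downarrow x}\ll_x\phi\}$; (compactness) for every directed $X\subseteq\Gamma_x$ and $\phi\in\Gamma_x$ with $\phi\le\vee X$ there is $\psi\in X$ with $\phi\le\psi$. *)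

From mathcomp Require Import all_boot all_order.
Import Order.Theory.
Set Implicit Arguments. Unset Strict Implicit. Unset Printing Implicit Defensive.
Local Open Scope order_scope.

Definition ile {T} (comb : T -> T -> T) (a b : T) : Prop := comb a b = b.

Definition idirected {T} (comb : T -> T -> T) (X : T -> Prop) : Prop :=
  (exists a, X a) /\
  forall a b, X a -> X b -> exists c, X c /\ ile comb a c /\ ile comb b c.

Definition is_sup_in {T} (comb : T -> T -> T) (U X : T -> Prop) (s : T) : Prop :=
  U s /\ (forall a, X a -> ile comb a s) /\
  (forall u, U u -> (forall a, X a -> ile comb a u) -> ile comb s u).

Definition way_below_in {T} (comb : T -> T -> T) (U : T -> Prop) (a b : T) : Prop :=
  forall X : T -> Prop, (forall c, X c -> U c) -> idirected comb X ->
  forall s, is_sup_in comb U X s -> ile comb b s ->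
  exists c, X c /\ ile comb a c.

Definition allT {T} : T -> Prop := fun _ => True.

Definition df_info_algebra {Phi : Type} {d : Order.disp_t} {D : latticeType d}
  (comb : Phi -> Phi -> Phi) (e : Phi) (focus : Phi -> D -> Phi) : Prop :=
  (forall a b c, comb a (comb b c) = comb (comb a b) c) /\
  (forall a b, comb a b = comb b a) /\
  (forall a, comb e a = a) /\
  (forall psi (x y : D), focus (focus psi y) x = focus psi (x `&` y)) /\
  (forall phi psi (x : D),
      focus (comb (focus phi x) psi) x = comb (focus phi x) (focus psi x)) /\
  (forall psi, exists x : D, focus psi x = psi) /\
  (forall psi (x : D), comb psi (focus psi x) = psi).

Definition df_finite {Phi : Type} (comb : Phi -> Phi -> Phi) (phi : Phi) : Prop :=
  way_below_in comb allT phi phi.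

Definition df_s_compact_with {Phi : Type} {d : Order.disp_t} {D : tLatticeType d}
  (comb : Phi -> Phi -> Phi) (e : Phi) (focus : Phi -> D -> Phi)
  (G : Phi -> Prop) : Prop :=
  (forall a b, G a -> G b -> G (comb a b)) /\ G e /\
  (forall X, (forall a, X a -> G a) -> idirected comb X ->
      exists s, is_sup_in comb allT X s) /\
  (forall phi (x : D),
      is_sup_in comb allT
        (fun psi => G psi /\ psi = focus psi x /\ way_below_in comb allT psi phi)
        (focus phi x)) /\
  (forall X phi, (forall a, X a -> G a) -> idirected comb X -> G phi ->
      forall s, is_sup_in comb allT X s -> ile comb phi s ->
      exists psi, X psi /\ ile comb phi psi).

Definition df_s_compact {Phi : Type} {d : Order.disp_t} {D : tLatticeType d}
  (comb : Phi -> Phi -> Phi) (e : Phi) (focus : Phi -> D -> Phi) : Prop :=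
  exists G : Phi -> Prop, df_s_compact_with comb e focus G.

(* The carrier is the subset [Psi] of an ambient type T; combination, marginalization
   ([marg a y] = a^{down y}, only meaningful for y <= lab a) and neutral elements are
   total functions on T. *)
Definition labeled_info_algebra {T : Type} {d : Order.disp_t} {D : latticeType d}
  (Psi : T -> Prop) (lab : T -> D) (comb : T -> T -> T) (marg : T -> D -> T)
  (neu : D -> T) : Prop :=
  (forall a b, Psi a -> Psi b -> Psi (comb a b)) /\
  (forall a y, Psi a -> y <= lab a -> Psi (marg a y)) /\
  (forall x, Psi (neu x)) /\
  (forall a b c, Psi a -> Psi b -> Psi c -> comb a (comb b c) = comb (comb a b) c) /\
  (forall a b, Psi a -> Psi b -> comb a b = comb b a) /\
  (forall a b, Psi a -> Psi b -> lab (comb a b) = lab a `|` lab b) /\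
  (forall a y, Psi a -> y <= lab a -> lab (marg a y) = y) /\
  (forall x, lab (neu x) = x) /\
  (forall a, Psi a -> comb a (neu (lab a)) = a) /\
  (forall x y, comb (neu x) (neu y) = neu (x `|` y)) /\
  (forall x y, x <= y -> marg (neu y) x = neu x) /\
  (forall a, Psi a -> marg a (lab a) = a) /\
  (forall a x y, Psi a -> x <= y -> y <= lab a -> marg (marg a y) x = marg a x) /\
  (forall a b, Psi a -> Psi b ->
      marg (comb a b) (lab a) = comb a (marg b (lab a `&` lab b))) /\
  (forall a x, Psi a -> x <= lab a -> comb a (marg a x) = a).

Definition labeled_s_compact {T : Type} {d : Order.disp_t} {D : tLatticeType d}
  (Psi : T -> Prop) (lab : T -> D) (comb : T -> T -> T) (marg : T -> D -> T)
  (neu : D -> T) (G : D -> T -> Prop) : Prop :=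
  labeled_info_algebra Psi lab comb marg neu /\
  forall x : D,
    let Phix := fun a => Psi a /\ lab a = x in
    (forall a, G x a -> Phix a) /\
    (forall a b, G x a -> G x b -> G x (comb a b)) /\
    G x (neu x) /\
    (forall X, (forall a, X a -> G x a) -> idirected comb X ->
        exists s, is_sup_in comb Phix X s) /\
    (forall phi, Phix phi ->
        is_sup_in comb Phix
          (fun chi => (exists psi, Psi psi /\ x <= lab psi /\ chi = marg psi x) /\
                      G x chi /\ G \top (comb chi (neu \top)) /\
                      way_below_in comb Phix chi phi)
          phi) /\
    (forall X phi, (forall a, X a -> G x a) -> idirected comb X -> G x phi ->
        forall s, is_sup_in comb Phix X s -> ile comb phi s ->
        exists psi, X psi /\ ile comb phi psi).

Section Assoc.
Context {Phi : Type} {d : Order.disp_t} {D : latticeType d}.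
Variables (comb : Phi -> Phi -> Phi) (e : Phi) (focus : Phi -> D -> Phi).

Definition assoc_Psi (p : Phi * D) : Prop := p.1 = focus p.1 p.2.
Definition assoc_lab (p : Phi * D) : D := p.2.
Definition assoc_comb (p q : Phi * D) : Phi * D := (comb p.1 q.1, p.2 `|` q.2).
Definition assoc_marg (p : Phi * D) (y : D) : Phi * D := (focus p.1 y, y).
Definition assoc_neu (x : D) : Phi * D := (e, x).
Definition assoc_Gamma (x : D) (p : Phi * D) : Prop :=
  df_finite comb p.1 /\ p.1 = focus p.1 x /\ p.2 = x.
End Assoc.

(* The labeled algebra of pairs (phi, x) with phi supported on x inherits its
   order fibrewise: on the pairs of a fixed label x, (phi, x) <= (psi, x) iff
   phi <= psi.  A directed set of such pairs therefore has as supremum the pair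
   formed by the supremum of its fibre, which exists in the domain-free algebra
   because every directed set is the supremum of the directed set of finite
   elements way below one of its members.  Way-below and compactness then
   transfer from Phi to each Phi_x, and strong density at label x is the
   domain-free density of phi^{=> x}, once one knows that the witness Gamma of
   s-compactness is necessarily Phi_f. *)
From Pilot Require Import Defs.
From mathcomp Require Import all_boot all_order.
Import Order.Theory.
Set Implicit Arguments. Unset Strict Implicit. Unset Printing Implicit Defensive.
Local Open Scope order_scope.

Section Suprema.
Variables (T : Type) (comb : T -> T -> T).

Lemma is_sup_in_ext U X Y s : (forall a, X a <-> Y a) ->
  is_sup_in comb U X s -> is_sup_in comb U Y s.
Proof.
move=> XY [Us [ub lub]]; split=> //; split=> [a /XY|u Uu hu]; first exact: ub.
by apply: lub => // a /XY; apply: hu.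
Qed.

Lemma is_sup_in_ile U X s t :
  is_sup_in comb U X s -> is_sup_in comb U X t -> ile comb s t.
Proof. by move=> [_ [_ lub]] [Ut [ub _]]; apply: lub. Qed.

Hypothesis combxx : idempotent_op comb.

Lemma idirected1 a : idirected comb (fun c => c = a).
Proof.
by split=> [|b c -> ->]; [exists a | exists a; split=> //; split; apply: combxx].
Qed.

Lemma is_sup_in1 U a : U a -> is_sup_in comb U (fun c => c = a) a.
Proof. by move=> Ua; split=> //; split=> [c ->|u _ hu]; [apply: combxx|apply: hu]. Qed.

Lemma way_below_in_ile U a b : U b -> way_below_in comb U a b -> ile comb a b.
Proof.
move=> Ub /(_ _ _ (idirected1 b) b (is_sup_in1 Ub) (combxx b)) [|c [-> //]].
by move=> c ->.
Qed.

End Suprema.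

Definition fibre {Phi : Type} {d : Order.disp_t} {D : latticeType d}
  (X : Phi * D -> Prop) (x : D) (a : Phi) : Prop := X (a, x).

Section InfoAlgebra.
Variables (Phi : Type) (d : Order.disp_t) (D : latticeType d).
Variables (comb : Phi -> Phi -> Phi) (e : Phi) (focus : Phi -> D -> Phi).
Hypothesis H : df_info_algebra comb e focus.

Local Notation le := (ile comb).
Local Notation wb := (way_below_in comb Defs.allT).

Lemma combA a b c : comb a (comb b c) = comb (comb a b) c.
Proof. by case: H. Qed.
Lemma combC a b : comb a b = comb b a.
Proof. by case: H => _ []. Qed.
Lemma combex a : comb e a = a.
Proof. by case: H => _ [_ []]. Qed.
Lemma focusA a (x y : D) : focus (focus a y) x = focus a (x `&` y).
Proof. by case: H => _ [_ [_ []]]. Qed.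
Lemma focus_comb_focus a b (x : D) :
  focus (comb (focus a x) b) x = comb (focus a x) (focus b x).
Proof. by case: H => _ [_ [_ [_ []]]]. Qed.
Lemma focus_support a : exists x : D, focus a x = a.
Proof. by case: H => _ [_ [_ [_ [_ []]]]]. Qed.
Lemma comb_focus a (x : D) : comb a (focus a x) = a.
Proof. by case: H => _ [_ [_ [_ [_ []]]]]. Qed.

Lemma combxx : idempotent_op comb.
Proof. by move=> a; have [x ax] := focus_support a; rewrite -{2}ax comb_focus. Qed.
Lemma combxe a : comb a e = a.
Proof. by rewrite combC combex. Qed.
Lemma focus_e x : focus e x = e.
Proof. by rewrite -{2}(comb_focus e x) combex. Qed.
Lemma focusK a x : focus (focus a x) x = focus a x.
Proof. by rewrite focusA meetxx. Qed.

Lemma supported_le a (x y : D) : a = focus a x -> x <= y -> a = focus a y.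
Proof. by move=> ax xy; rewrite ax focusA (meet_r xy). Qed.

Lemma supported_comb a b (x : D) :
  a = focus a x -> b = focus b x -> comb a b = focus (comb a b) x.
Proof. by move=> ax bx; rewrite [in RHS]ax focus_comb_focus -ax -bx. Qed.

Lemma ile_refl a : le a a.
Proof. exact: combxx. Qed.
Lemma ile_trans a b c : le a b -> le b c -> le a c.
Proof. by rewrite /ile => ab <-; rewrite combA ab. Qed.
Lemma ile_anti a b : le a b -> le b a -> a = b.
Proof. by rewrite /ile => ab <-; rewrite combC ab. Qed.
Lemma ile_combl a b : le a (comb a b).
Proof. by rewrite /ile combA combxx. Qed.
Lemma ile_combr a b : le b (comb a b).
Proof. by rewrite combC; apply: ile_combl. Qed.
Lemma ile_comb_lub a b c : le a c -> le b c -> le (comb a b) c.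
Proof. by rewrite /ile => ac bc; rewrite -combA bc ac. Qed.
Lemma ile_focus a x : le (focus a x) a.
Proof. by rewrite /ile combC comb_focus. Qed.
Lemma ile_focus2 a b x : le a b -> le (focus a x) (focus b x).
Proof.
move=> ab; rewrite /ile -focus_comb_focus.
by rewrite (ile_trans (ile_focus a x) ab).
Qed.

Lemma sup_supported X s x : (forall a, X a -> a = focus a x) ->
  is_sup_in comb Defs.allT X s -> s = focus s x.
Proof.
move=> Xx [_ [ub lub]]; apply: ile_anti; last exact: ile_focus.
apply: lub => // a Xa; rewrite (Xx a Xa); apply: ile_focus2; exact: ub.
Qed.

Lemma way_below_ile_trans a b c : wb a b -> le b c -> wb a c.
Proof.
by move=> ab bc X XU Xd s Xs cs; apply: (ab X XU Xd s Xs); apply: ile_trans cs.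
Qed.

Lemma way_below_comb a b c : wb a c -> wb b c -> wb (comb a b) c.
Proof.
move=> ac bc X XU Xd s Xs cs.
have [c1 [Xc1 ac1]] := ac X XU Xd s Xs cs.
have [c2 [Xc2 bc2]] := bc X XU Xd s Xs cs.
have [c3 [Xc3 [c13 c23]]] := Xd.2 c1 c2 Xc1 Xc2.
exists c3; split=> //.
by apply: ile_comb_lub; [apply: ile_trans c13|apply: ile_trans c23].
Qed.

Lemma way_below_e a : wb e a.
Proof. by move=> X _ [[c Xc] _] s _ _; exists c; split=> //; apply: combex. Qed.

Lemma assoc_combxx : idempotent_op (@assoc_comb _ _ D comb).
Proof. by move=> [a x]; rewrite /assoc_comb /= combxx joinxx. Qed.

Lemma assoc_ile_fst (p q : Phi * D) : ile (assoc_comb comb) p q -> le p.1 q.1.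
Proof. by move=> /(congr1 fst). Qed.

Lemma assoc_ile_pair a b (x : D) : le a b -> ile (assoc_comb comb) (a, x) (b, x).
Proof. by move=> ab; rewrite /ile /assoc_comb /= ab joinxx. Qed.

Lemma assoc_labeled_info_algebra :
  labeled_info_algebra (assoc_Psi focus) assoc_lab (assoc_comb comb)
    (assoc_marg focus) (assoc_neu e).
Proof.
rewrite /labeled_info_algebra /assoc_Psi /assoc_lab /assoc_comb /assoc_marg
  /assoc_neu.
split=> [[a x] [b y] /= ax by_|].
  by apply: supported_comb; [apply: supported_le ax _|apply: supported_le by_ _];
    rewrite ?leUl ?leUr.
split=> [[a x] y _ _ /=|]; first by rewrite focusK.
split=> [x /=|]; first by rewrite focus_e.
split=> [[a x] [b y] [c z] _ _ _ /=|]; first by rewrite combA joinA.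
split=> [[a x] [b y] _ _ /=|]; first by rewrite combC joinC.
do 3![split=> //]; split=> [[a x] _ /=|]; first by rewrite combxe joinxx.
split=> [x y /=|]; first by rewrite combxx.
split=> [x y _ /=|]; first by rewrite focus_e.
split=> [[a x] /= <-|] //.
split=> [[a z] x y _ xy _ /=|]; first by rewrite focusA (meet_l xy).
split=> [[a x] [b y] /= ax by_|[a x] y _ yx /=].
  by rewrite meetKU {1}ax focus_comb_focus -ax [in focus b x]by_ focusA.
by rewrite comb_focus (join_l yx).
Qed.

End InfoAlgebra.

Section SCompact.
Variables (Phi : Type) (d : Order.disp_t) (D : tLatticeType d).
Variables (comb : Phi -> Phi -> Phi) (e : Phi) (focus : Phi -> D -> Phi).
Hypothesis H : df_info_algebra comb e focus.
Variable G : Phi -> Prop.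
Hypothesis HG : df_s_compact_with comb e focus G.

Local Notation le := (ile comb).
Local Notation wb := (way_below_in comb Defs.allT).

Let G_comb : forall a b, G a -> G b -> G (comb a b).
Proof. by case: HG. Qed.
Let G_e : G e.
Proof. by case: HG => _ []. Qed.
Let G_sup : forall X, (forall a, X a -> G a) -> idirected comb X ->
  exists s, is_sup_in comb Defs.allT X s.
Proof. by case: HG => _ [_ []]. Qed.
Let G_density : forall phi x, is_sup_in comb Defs.allT
  (fun psi => G psi /\ psi = focus psi x /\ wb psi phi) (focus phi x).
Proof. by case: HG => _ [_ [_ []]]. Qed.
Let G_compact : forall X phi,
  (forall a, X a -> G a) -> idirected comb X -> G phi ->
  forall s, is_sup_in comb Defs.allT X s -> le phi s ->
  exists psi, X psi /\ le phi psi.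
Proof. by case: HG => _ [_ [_ []]]. Qed.

Lemma focus_top a : focus a \top = a.
Proof. by have [x ax] := focus_support H a; rewrite -ax (focusA H) meet1x. Qed.

Lemma density_directed phi x :
  idirected comb (fun psi => G psi /\ psi = focus psi x /\ wb psi phi).
Proof.
split.
  by exists e; rewrite (focus_e H); split=> //; split=> //; apply: (way_below_e H).
move=> a b [Ga [ax aphi]] [Gb [bx bphi]]; exists (comb a b).
split; last by split; [apply: (ile_combl H)|apply: (ile_combr H)].
split; first exact: G_comb.
by split; [apply: (supported_comb H)|apply: (way_below_comb H)].
Qed.

Definition approximants (X : Phi -> Prop) (g : Phi) : Prop :=
  G g /\ exists2 c, X c & wb g c.

Lemma approximants_directed X : idirected comb X -> idirected comb (approximants X).
Proof.
move=> [[c0 Xc0] Xd]; split.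
  by exists e; split=> //; exists c0 => //; apply: (way_below_e H).
move=> g1 g2 [Gg1 [c1 Xc1 gc1]] [Gg2 [c2 Xc2 gc2]].
have [c3 [Xc3 [c13 c23]]] := Xd c1 c2 Xc1 Xc2.
exists (comb g1 g2); split; last by split; [apply: (ile_combl H)|apply: (ile_combr H)].
split; first exact: G_comb.
by exists c3 => //; apply: (way_below_comb H);
  [apply: (way_below_ile_trans H) gc1 c13|apply: (way_below_ile_trans H) gc2 c23].
Qed.

(* Each c is the supremum of the finite elements way below it (density at \top). *)
Lemma approximants_sup X t :
  is_sup_in comb Defs.allT (approximants X) t -> is_sup_in comb Defs.allT X t.
Proof.
move=> [_ [ub lub]]; split=> //; split=> [c Xc|u _ hu].
  have [_ [_ lubc]] := G_density c \top; rewrite focus_top in lubc.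
  by apply: lubc => // g [Gg [_ gc]]; apply: ub; split=> //; exists c.
apply: lub => // g [_ [c Xc gc]].
exact: (ile_trans H) (way_below_in_ile (combxx H) I gc) (hu c Xc).
Qed.

Lemma approximants_sup_exists X : idirected comb X ->
  exists t, is_sup_in comb Defs.allT (approximants X) t.
Proof. by move=> Xd; apply: G_sup (approximants_directed Xd) => g []. Qed.

Lemma directed_sup_exists X : idirected comb X ->
  exists t, is_sup_in comb Defs.allT X t.
Proof.
move=> Xd; have [t At] := approximants_sup_exists Xd.
by exists t; apply: approximants_sup.
Qed.

Lemma below_directed_sup X t g : idirected comb X -> is_sup_in comb Defs.allT X t ->
  G g -> le g t -> exists c, X c /\ le g c.
Proof.
move=> Xd Xt Gg gt.
have [t' At'] := approximants_sup_exists Xd.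
have gt' : le g t'.
  exact: (ile_trans H) gt (is_sup_in_ile Xt (approximants_sup At')).
have [g' [[_ [c Xc g'c]] gg']] :=
  G_compact (fun g => @proj1 _ _) (approximants_directed Xd) Gg At' gt'.
by exists c; split=> //; apply: (ile_trans H) gg' (way_below_in_ile (combxx H) I g'c).
Qed.

Lemma witness_finite a : G a -> df_finite comb a.
Proof. by move=> Ga X _ Xd s Xs; apply: below_directed_sup Xd Xs Ga. Qed.

Lemma finite_witness a : df_finite comb a -> G a.
Proof.
move=> fa; have Xa := G_density a \top; rewrite focus_top in Xa.
have [c [[Gc [_ ca]] ac]] :=
  fa _ (fun _ _ => I) (density_directed a \top) a Xa (ile_refl H a).
by rewrite (ile_anti H ac (way_below_in_ile (combxx H) I ca)).
Qed.

End SCompact.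

Lemma df_s_compact_with_finite (Phi : Type) (d : Order.disp_t) (D : tLatticeType d)
  (comb : Phi -> Phi -> Phi) (e : Phi) (focus : Phi -> D -> Phi) :
  df_info_algebra comb e focus -> df_s_compact comb e focus ->
  df_s_compact_with comb e focus (df_finite comb).
Proof.
move=> H [G HG].
have finG a : df_finite comb a <-> G a.
  by split=> [/(finite_witness H HG)|/(witness_finite H HG)].
have [G_comb [G_e [_ [G_density G_compact]]]] := HG.
split=> [a b /finG Ga /finG Gb|]; first exact/finG/G_comb.
split; first exact/finG.
split=> [X _ Xd|]; first exact: (directed_sup_exists H HG Xd).
split=> [phi x|X phi XF Xd /finG Gphi].
  apply: is_sup_in_ext (G_density phi x) => psi.
  by split=> -[/finG Gpsi psix]; split.
by apply: G_compact => // a /XF /finG.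
Qed.

Section LabeledSCompact.
Variables (Phi : Type) (d : Order.disp_t) (D : tLatticeType d).
Variables (comb : Phi -> Phi -> Phi) (e : Phi) (focus : Phi -> D -> Phi).
Hypothesis H : df_info_algebra comb e focus.
Hypothesis HF : df_s_compact_with comb e focus (df_finite comb).
Variable x : D.

Local Notation Phix := (fun p : Phi * D => assoc_Psi focus p /\ assoc_lab p = x).
Local Notation pcomb := (assoc_comb comb).
Local Notation Gamma := (assoc_Gamma comb focus).
Local Notation wb := (way_below_in comb Defs.allT).

Lemma assoc_Gamma_supported p : Gamma x p -> Phix p.
Proof. by case: p => a y [_ [ax /= ->]]. Qed.

Lemma assoc_Gamma_comb p q : Gamma x p -> Gamma x q -> Gamma x (pcomb p q).
Proof.
case: HF => F_comb _; case: p q => [a y] [b z] [fa [/= ax ->]] [fb [/= bx ->]].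
by split; [apply: F_comb|split; [apply: (supported_comb H)|apply: joinxx]].
Qed.

Lemma assoc_Gamma_neu : Gamma x (assoc_neu e x).
Proof. by case: HF => _ [F_e _]; split=> //=; rewrite (focus_e H). Qed.

Lemma fibre_directed X :
  (forall p, X p -> Phix p) -> idirected pcomb X -> idirected comb (fibre X x).
Proof.
move=> XPx [[[a0 y0] Xa0] Xd]; split.
  by exists a0; have [_ /= yx] := XPx _ Xa0; rewrite /fibre -yx.
move=> a b Xa Xb; have [[c y] [Xc [ac bc]]] := Xd _ _ Xa Xb.
have [_ /= yx] := XPx _ Xc; subst y.
by exists c; split=> //; split; [apply: assoc_ile_fst ac|apply: assoc_ile_fst bc].
Qed.

Lemma fibre_sup X t : (forall p, X p -> Phix p) ->
  is_sup_in comb Defs.allT (fibre X x) t -> is_sup_in pcomb Phix X (t, x).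
Proof.
move=> XPx Xt; have tx : t = focus t x.
  by apply: (sup_supported H _ Xt) => a /XPx [].
case: Xt => _ [ub lub]; split=> //; split=> [[a y] Xa|[u y] [_ /= yx] hu].
  have [_ /= yx] := XPx _ Xa; subst y.
  by apply/assoc_ile_pair/ub.
subst y; apply/assoc_ile_pair/lub => // a Xa.
exact: assoc_ile_fst (hu _ Xa).
Qed.

Lemma assoc_way_below psi p : wb psi p -> way_below_in pcomb Phix (psi, x) (p, x).
Proof.
move=> psip X XPx Xd s Xs ps.
have Fd := fibre_directed XPx Xd.
have [t Ft] := directed_sup_exists H HF Fd.
have st := assoc_ile_fst (is_sup_in_ile Xs (fibre_sup XPx Ft)).
have [c [Xc psic]] :=
  psip _ (fun _ _ => I) Fd t Ft (ile_trans H (assoc_ile_fst ps) st).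
by exists (c, x); split=> //; apply: assoc_ile_pair.
Qed.

Lemma assoc_convergency X : (forall p, X p -> Gamma x p) -> idirected pcomb X ->
  exists s, is_sup_in pcomb Phix X s.
Proof.
move=> XG Xd; have XPx p (Xp : X p) : Phix p := assoc_Gamma_supported (XG p Xp).
have [t Ft] := directed_sup_exists H HF (fibre_directed XPx Xd).
by exists (t, x); apply: fibre_sup.
Qed.

Lemma assoc_compactness X phi : (forall p, X p -> Gamma x p) ->
  idirected pcomb X -> Gamma x phi ->
  forall s, is_sup_in pcomb Phix X s -> ile pcomb phi s ->
  exists psi, X psi /\ ile pcomb phi psi.
Proof.
move=> XG Xd; case: phi => p y [fp [_ /= ->]].
exact: (assoc_way_below fp (fun q Xq => assoc_Gamma_supported (XG q Xq)) Xd).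
Qed.

Lemma assoc_density_member p psi : df_finite comb psi -> psi = focus psi x -> wb psi p ->
  (exists chi, assoc_Psi focus chi /\ x <= assoc_lab chi /\
                (psi, x) = assoc_marg focus chi x) /\
  Gamma x (psi, x) /\ Gamma \top (pcomb (psi, x) (assoc_neu e \top)) /\
  way_below_in pcomb Phix (psi, x) (p, x).
Proof.
move=> fpsi psix psip; split; first by exists (psi, x); rewrite /assoc_marg /= -psix.
split=> //; split; last exact: assoc_way_below.
by rewrite /assoc_Gamma /assoc_comb /= (combxe H) joinx1 (focus_top H).
Qed.

Lemma assoc_density phi : Phix phi ->
  is_sup_in pcomb Phix
    (fun chi => (exists psi, assoc_Psi focus psi /\ x <= assoc_lab psi /\
                             chi = assoc_marg focus psi x) /\
                Gamma x chi /\ Gamma \top (pcomb chi (assoc_neu e \top)) /\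
                way_below_in pcomb Phix chi phi)
    phi.
Proof.
case: phi => p y [px /= yx]; subst y; split; first by split.
split=> [chi [_ [_ [_ chip]]]|[u y] [_ /= ->] hu].
  exact: (way_below_in_ile (assoc_combxx H) (conj px erefl) chip).
case: HF => _ [_ [_ [F_density _]]].
have [_ [_ lub]] := F_density p x; rewrite -px in lub.
apply/assoc_ile_pair/lub => // psi [fpsi [psix psip]].
exact: assoc_ile_fst (hu _ (assoc_density_member fpsi psix psip)).
Qed.

End LabeledSCompact.

Theorem theorem4p8 (Phi : Type) (d : Order.disp_t) (D : tLatticeType d)
  (comb : Phi -> Phi -> Phi) (e : Phi) (focus : Phi -> D -> Phi) :
  df_info_algebra comb e focus ->
  df_s_compact comb e focus ->
  labeled_s_compact (assoc_Psi focus) assoc_lab (assoc_comb comb)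
    (assoc_marg focus) (assoc_neu e) (assoc_Gamma comb focus).
Proof.
move=> H /(df_s_compact_with_finite H) HF.
split; first exact: assoc_labeled_info_algebra.
move=> x Phix; split; first exact: assoc_Gamma_supported.
split; first exact: (assoc_Gamma_comb H HF).
split; first exact: (assoc_Gamma_neu H HF).
split; first exact: (assoc_convergency H HF).
split; first exact: (assoc_density H HF).
exact: (assoc_compactness H HF).
Qed.
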